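(* Let $q=q_1q_2\cdots q_k$ be a permutation of $\{1,\dots,k\}$ with $q_1<q_k$. Let $p=p_1\cdots p_n$ be a permutation that very tightly contains $q$ at two different starting positions $i$ and $i+j$ with $1\le j$, i.e. both $p_{i+1}\cdots p_{i+k}$ and $p_{i+j+1}\cdots p_{i+j+k}$ are very tight copies of $q$. Then these two copies occupy disjoint sets of positions (i.e. $j\ge k$) unless there exists a positive integer $s\le k-1$ such that (1) the rightmost $s$ entries $q_{k-s+1},\dots,q_k$ of $q$ are the $s$ largest entries of $q$, and the leftmost $s$ entries $q_1,\dots,q_s$ of $q$ are the $s$ smallest entries of $q$; and (2) the sequence $q_1\cdots q_s$ and the sequence $q_{k-s+1}\cdots q_k$ are order-isomorphic (form the same pattern).
   Context: For a permutation $p=p_1\cdots p_n$ and a permutation $q=q_1\cdots q_k$ with $k<n$, a very tight copy of $q$ in $p$ starting at position $i$ (with $0\le i\le n-k$) means: for all $1\le j,r\le k$, $q_j<q_r$ if and only if $p_{i+j}<p_{i+r}$, and moreover $\{p_{i+1},\dots,p_{i+k}\}=\{a+1,\dots,a+k\}$ for some integer $0\le a\le n-k$ (the entries are in consecutive positions and form an interval of integers). Two sequences are order-isomorphic if their entries compare in the same way position by position. *)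

From mathcomp Require Import all_boot fingroup perm.
Set Implicit Arguments. Unset Strict Implicit. Unset Printing Implicit Defensive.
Local Open Scope nat_scope.

(* Permutations of {1..n} are modelled as p : 'S_n, i.e. bijections of 'I_n = {0..n-1};
   entry p_{x+1} of the paper is (p x) (positions and values shifted down by one). *)

(* value of p at a position given as a natural number (0 outside the range) *)
Definition pat {n} (p : 'S_n) (x : nat) : nat :=
  match insub x with Some y => nat_of_ord (p y) | None => 0 end.

(* very tight copy of q in p starting at position i (paper's i, 0 <= i <= n-k):
   entries p_{i+1..i+k} (here pat p (i+j), j < k) are order-isomorphic to q and
   form an interval of integers {a+1..a+k} (here {a..a+k-1}) with 0 <= a <= n-k. *)
Definition very_tight_at {n k} (p : 'S_n) (q : 'S_k) (i : nat) : Prop :=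
  i <= n - k /\
  (forall j r : 'I_k, (q j < q r) <-> (pat p (i + j) < pat p (i + r))) /\
  exists a, a <= n - k /\
    forall v, (exists j : 'I_k, pat p (i + j) = v) <-> a <= v < a + k.

Definition ends_extreme {k} (q : 'S_k) (s : nat) : Prop :=
  (forall x, k - s <= x < k -> forall y, y < k - s -> pat q y < pat q x) /\
  (forall x, x < s -> forall y, s <= y < k -> pat q x < pat q y).

Definition ends_same_pattern {k} (q : 'S_k) (s : nat) : Prop :=
  forall a b, a < s -> b < s ->
    (pat q a < pat q b) <-> (pat q (k - s + a) < pat q (k - s + b)).

(* Suppose the two very tight copies start at [i] and [i + j] with [0 < j < k], and
   let their value intervals be [a, a + k) and [b, b + k).  Every position of the first
   copy lying before [i + j] carries a value outside [b, b + k), and symmetrically.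
   If [b <= a], the first entry of the first copy would exceed its last entry, against
   [q_1 < q_k]; hence [a < b].  Then the first [j] entries of the first copy lie below
   [b], the shared [s = k - j] entries lie in [b, a + k), and the last [j] entries of
   the second copy lie above [a + k): this is condition (1).  The shared block is the
   suffix of one copy and the prefix of the other, which gives condition (2). *)
From mathcomp Require Import all_boot fingroup perm.
From mathcomp Require Import zify.

Lemma patE {m} (p : 'S_m) {x} (lt_x_m : x < m) : pat p x = p (Ordinal lt_x_m).
Proof. by rewrite /pat insubT. Qed.

Lemma pat_inj {m} (p : 'S_m) x y : x < m -> y < m -> pat p x = pat p y -> x = y.
Proof.
move=> lt_x_m lt_y_m; rewrite (patE p lt_x_m) (patE p lt_y_m).
by move=> /val_inj/perm_inj/(congr1 val).
Qed.

Definition window_values {n} (k : nat) (p : 'S_n) (i a : nat) : Prop :=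
  forall v, (exists2 u, u < k & pat p (i + u) = v) <-> a <= v < a + k.

Section Windows.

Context {n k : nat} {p : 'S_n}.

Lemma window_values_mem {i a} t :
  window_values k p i a -> t < k -> a <= pat p (i + t) < a + k.
Proof. by move=> win lt_t_k; apply/win; exists t. Qed.

Lemma window_values_pos {i a} x :
  window_values k p i a -> i + k <= n -> x < n ->
  a <= pat p x < a + k -> i <= x < i + k.
Proof.
move=> win fits lt_x_n /win [u lt_u_k eq_pat].
by have := pat_inj p (i + u) x _ _ eq_pat; lia.
Qed.

Lemma very_tight_order {q : 'S_k} {i} : very_tight_at p q i ->
  forall x y, x < k -> y < k -> pat q x < pat q y <-> pat p (i + x) < pat p (i + y).
Proof.
move=> [_ [iso _]] x y lt_x_k lt_y_k.
by rewrite (patE q lt_x_k) (patE q lt_y_k); apply: (iso (Ordinal _) (Ordinal _)).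
Qed.

Lemma very_tight_window {q : 'S_k} {i} :
  very_tight_at p q i -> exists a, window_values k p i a.
Proof.
move=> [_ [_ [a [_ win]]]]; exists a => v; rewrite -win.
by split=> [[u lt_u_k <-] | [u <-]]; [exists (Ordinal lt_u_k) | exists u].
Qed.

End Windows.

Section OverlappingCopies.

Context {n k : nat} {p : 'S_n} {q : 'S_k} {i j a b : nat}.

Hypothesis j_gt0 : 0 < j.
Hypothesis lt_j_k : j < k.
Hypothesis fits : i + j + k <= n.
Hypothesis order_i : forall x y, x < k -> y < k ->
  pat q x < pat q y <-> pat p (i + x) < pat p (i + y).
Hypothesis order_ij : forall x y, x < k -> y < k ->
  pat q x < pat q y <-> pat p (i + j + x) < pat p (i + j + y).
Hypothesis win_i : window_values k p i a.
Hypothesis win_ij : window_values k p (i + j) b.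

Let mem_i t (lt_t_k : t < k) := window_values_mem t win_i lt_t_k.
Let mem_ij t (lt_t_k : t < k) := window_values_mem t win_ij lt_t_k.
Let pos_i x := window_values_pos x win_i.
Let pos_ij x := window_values_pos x win_ij.

Lemma overlapping_windows_increase : pat q 0 < pat q k.-1 -> a < b.
Proof.
move=> q_first_last; rewrite ltnNge; apply/negP => le_b_a.
have first_above : b + k <= pat p (i + 0).
  have := mem_i 0 ltac:(lia); have := pos_ij (i + 0) ltac:(lia) ltac:(lia); lia.
have last_below : pat p (i + k.-1) < b + k.
  have := mem_ij (k - 1 - j) ltac:(lia).
  have -> : i + j + (k - 1 - j) = i + k.-1 by lia.
  lia.
have := (order_i k.-1 0 ltac:(lia) ltac:(lia)).2 ltac:(lia); lia.
Qed.

Lemma overlapping_ends_extreme : a < b -> ends_extreme q (k - j).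
Proof.
move=> lt_a_b; rewrite /ends_extreme; have -> : k - (k - j) = j by lia.
split=> [x x_shared y lt_y_j | x lt_x_shared y y_new].
- apply/(order_i y x); try lia.
  have := mem_ij (x - j) ltac:(lia).
  have -> : i + j + (x - j) = i + x by lia.
  have := mem_i y ltac:(lia); have := pos_ij (i + y) ltac:(lia) ltac:(lia); lia.
- apply/(order_ij x y); try lia.
  have := mem_i (j + x) ltac:(lia); rewrite addnA.
  have := mem_ij y ltac:(lia); have := pos_i (i + j + y) ltac:(lia) ltac:(lia); lia.
Qed.

Lemma overlapping_ends_same_pattern : ends_same_pattern q (k - j).
Proof.
move=> x y lt_x_shared lt_y_shared; have -> : k - (k - j) = j by lia.
by rewrite order_ij ?order_i ?addnA; lia.
Qed.

End OverlappingCopies.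

Theorem proposition4p2 (k n : nat) (q : 'S_k) (p : 'S_n) (i j : nat) :
  pat q 0 < pat q k.-1 ->
  k < n ->
  1 <= j ->
  very_tight_at p q i ->
  very_tight_at p q (i + j) ->
  k <= j \/
  exists s, 0 < s <= k - 1 /\ ends_extreme q s /\ ends_same_pattern q s.
Proof.
move=> q_first_last lt_k_n j_gt0 tight_i tight_ij.
have [le_k_j | lt_j_k] := leqP k j; [by left | right].
have fits : i + j + k <= n by case: tight_ij; lia.
have order_i := very_tight_order tight_i.
have order_ij := very_tight_order tight_ij.
have [a win_i] := very_tight_window tight_i.
have [b win_ij] := very_tight_window tight_ij.
have lt_a_b := overlapping_windows_increase j_gt0 lt_j_k fits order_i win_i win_ij
  q_first_last.
exists (k - j); split; first lia.
split; first exact: (overlapping_ends_extreme j_gt0 lt_j_k fits order_i order_ij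
  win_i win_ij lt_a_b).
exact: overlapping_ends_same_pattern order_i order_ij.
Qed.
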